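(* Let $\Sigma$ be a finite alphabet. For every unranked ordered $\Sigma$-labeled tree $t$ with $|t|\ge 2$, we have $|\mathrm{dag}(t)| \le \frac12 |\mathrm{hdag}(t)|^2$.
   Context: An unranked tree over $\Sigma$ is a finite rooted tree with nodes labeled in $\Sigma$ and linearly ordered children (arbitrary finite number); $|t|$ is its number of edges. $\mathrm{dag}(t)$ is the minimal dag of $t$: its nodes are the distinct subtrees of $t$, and the node of a subtree $f(s_1,\dots,s_k)$ has $k$ ordered edges to the nodes of $s_1,\dots,s_k$; $|\mathrm{dag}(t)|$ is its number of edges. The first-child/next-sibling encoding $\mathrm{fcns}$ maps a sequence of unranked trees to a binary tree (optional left and right child at each node): $\mathrm{fcns}(\varepsilon)$ is empty and $\mathrm{fcns}(t_1\cdots t_n)=f(\mathrm{fcns}(u_1\cdots u_m),\mathrm{fcns}(t_2\cdots t_n))$ when $t_1=f(u_1,\dots,u_m)$. Hybrid dag: for each distinct subtree $s=f(s_1,\dots,s_k)$ of $t$ with $k\ge1$ introduce a fresh symbol $A_s$ and the height-one tree $\rho_s=f(\alpha_1,\dots,\alpha_k)$, where $\alpha_i$ is the label of $s_i$ if $s_i$ is a single node and $\alpha_i=A_{s_i}$ otherwise. Let $\rho'_s$ be $\rho_s$ with its root additionally marked by $A_s$. $\mathrm{hdag}(t)$ is the minimal dag of the forest of binary trees $\mathrm{fcns}(\rho'_s)$ (identical subtrees anywhere in the forest merged), and $|\mathrm{hdag}(t)|$ is its number of edges, not counting edges to absent children. *)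

From HB Require Import structures.
From mathcomp Require Import all_boot.

Set Implicit Arguments.
Unset Strict Implicit.
Unset Printing Implicit Defensive.

Inductive tree (A : Type) : Type := Node of A & seq (tree A).
Arguments Node {A}.

Definition label A (t : tree A) := let: Node a _ := t in a.
Definition children A (t : tree A) := let: Node _ ts := t in ts.

Definition tree_ind' (A : Type) (P : tree A -> Prop)
  (H : forall a ts, foldr (fun t acc => P t /\ acc) True ts -> P (Node a ts)) :
  forall t, P t :=
  fix F t := match t with
  | Node a ts => H a ts
      ((fix G (ts : seq (tree A)) : foldr (fun t acc => P t /\ acc) True ts :=
          match ts with [::] => I | t :: ts' => conj (F t) (G ts') end) ts)
  end.

Section TreeEq.
Variable A : eqType.

Fixpoint tree_eqb (t u : tree A) : bool :=
  match t, u with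
  | Node a ts, Node b us =>
      (a == b) &&
      (fix eqs (ts us : seq (tree A)) : bool :=
         match ts, us with
         | [::], [::] => true
         | t :: ts', u :: us' => tree_eqb t u && eqs ts' us'
         | _, _ => false
         end) ts us
  end.

Lemma tree_eqbP : Equality.axiom tree_eqb.
Proof.
move=> t u; apply: (iffP idP); last first.
  move=> <-; elim/tree_ind': t => a ts IH /=; rewrite eqxx /=.
  by elim: ts IH => [|t ts IHts] //= [-> /IHts].
elim/tree_ind': t u => a ts IH [b us] /= /andP[/eqP <- H]; congr Node.
elim: ts us IH H => [|t ts IHts] [|u us] //= [Ht IHrest] /andP[/Ht -> /(IHts _ IHrest) ->].
done.
Qed.

HB.instance Definition _ := hasDecEq.Build (tree A) tree_eqbP.
End TreeEq.

(* |t| : number of edges *)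
Fixpoint edges A (t : tree A) : nat :=
  let: Node _ ts := t in size ts + sumn (map (@edges A) ts).

Fixpoint subtrees A (t : tree A) : seq (tree A) :=
  let: Node _ ts := t in t :: flatten (map (@subtrees A) ts).

(* |dag(t)| : nodes are the distinct subtrees; the node of f(s_1..s_k) has k edges *)
Definition dag_size (A : eqType) (t : tree A) : nat :=
  sumn [seq size (children s) | s <- undup (subtrees t)].

Inductive btree (L : Type) : Type :=
| BEmpty : btree L
| BNode : L -> btree L -> btree L -> btree L.
Arguments BEmpty {L}.
Arguments BNode {L}.

Section BtreeEq.
Variable L : eqType.
Fixpoint btree_eqb (t u : btree L) : bool :=
  match t, u with
  | BEmpty, BEmpty => true
  | BNode a l r, BNode b l' r' => [&& a == b, btree_eqb l l' & btree_eqb r r']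
  | _, _ => false
  end.
Lemma btree_eqbP : Equality.axiom btree_eqb.
Proof.
move=> t u; apply: (iffP idP); last first.
  by move=> <-; elim: t => //= a l -> r ->; rewrite eqxx.
elim: t u => [|a l IHl r IHr] [|b l' r'] //= /and3P[/eqP <- /IHl <- /IHr <-].
done.
Qed.
HB.instance Definition _ := hasDecEq.Build (btree L) btree_eqbP.
End BtreeEq.

(* first-child / next-sibling encoding of a sequence of unranked trees *)
Fixpoint fcn A (t : tree A) (sib : btree A) : btree A :=
  let: Node f us := t in BNode f (foldr (@fcn A) BEmpty us) sib.
Definition fcns A (ts : seq (tree A)) : btree A := foldr (@fcn A) BEmpty ts.

Lemma fcns_nil A : fcns (A:=A) [::] = BEmpty. Proof. by []. Qed.
Lemma fcns_cons A (f : A) us ts :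
  fcns (Node f us :: ts) = BNode f (fcns us) (fcns ts).
Proof. by []. Qed.

Fixpoint bsubtrees L (t : btree L) : seq (btree L) :=
  match t with
  | BEmpty => [::]
  | BNode _ l r => t :: bsubtrees l ++ bsubtrees r
  end.

Definition bout (L : eqType) (t : btree L) : nat :=
  match t with
  | BEmpty => 0
  | BNode _ l r => (l != BEmpty) + (r != BEmpty)
  end.

(* size of the minimal dag of a forest of binary trees
   (identical subtrees anywhere in the forest merged) *)
Definition forest_dag_size (L : eqType) (F : seq (btree L)) : nat :=
  sumn [seq bout s | s <- undup (flatten (map (@bsubtrees L) F))].

(* Labels of the height-one trees rho'_s: the first component is
   a letter of Sigma (inl) or a nonterminal A_{s'} (inr s'), where the fresh
   symbol A_{s'} is identified with the subtree s' itself (so that distinct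
   subtrees get distinct symbols); the second component is the root marking:
   Some s for the root of rho'_s (marked by A_s), None otherwise. *)
Definition hlabel (A : eqType) := ((A + tree A) * option (tree A))%type.

Definition alpha (A : eqType) (s : tree A) : A + tree A :=
  if children s is [::] then inl (label s) else inr s.

Definition rho' (A : eqType) (s : tree A) : tree (hlabel A) :=
  Node (inl (label s), Some s)
       [seq Node (alpha u, None) [::] | u <- children s].

Definition hdag_forest (A : eqType) (t : tree A) : seq (btree (hlabel A)) :=
  [seq fcns [:: rho' s] | s <- undup (subtrees t) & 0 < size (children s)].

Definition hdag_size (A : eqType) (t : tree A) : nat :=
  forest_dag_size (hdag_forest t).

From mathcomp Require Import all_boot zify.

(* Let n be the number of distinct internal subtrees of t and h = |hdag(t)|.
   Every tree of the hdag forest has a root with one edge (to its first child),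
   and the first-child/next-sibling encoding of the k children of any internal
   subtree is a right spine contributing k - 1 further edges.  Hence every
   internal subtree has at most h + 1 - n children, and
   |dag(t)| <= n (h + 1 - n) <= h^2 / 2, where the last step only fails if
   n = 1 and the root has a single child, which |t| >= 2 excludes. *)

Set Implicit Arguments.
Unset Strict Implicit.
Unset Printing Implicit Defensive.

Lemma sumn_map_le_undup (T : eqType) (f : T -> nat) (s s' : seq T) :
  uniq s -> {subset s <= s'} -> sumn (map f s) <= sumn (map f (undup s')).
Proof.
move=> us ss'; rewrite !sumnE !big_map.
apply: (uniq_sub_le_big (@leqnn) (fun m n => leq_addr n m)) => //.
  exact: undup_uniq.
by move=> x /ss'; rewrite mem_undup.
Qed.

Lemma sumn_map_pos (T : Type) (f : T -> nat) (s : seq T) :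
  sumn (map f s) = sumn (map f [seq x <- s | 0 < f x]).
Proof.
rewrite !sumnE !big_map big_filter; symmetry.
by apply: big_rmcond => x; rewrite lt0n negbK => /eqP.
Qed.

Lemma sumn_map_le_const (T : eqType) (f : T -> nat) (s : seq T) c :
  {in s, forall x, f x <= c} -> sumn (map f s) <= size s * c.
Proof.
elim: s => //= x s IH fc; rewrite mulSn leq_add ?fc ?mem_head // IH // => y ys.
by apply: fc; rewrite inE ys orbT.
Qed.

Lemma leq_double_mul_sqr m n :
  0 < m -> 0 < n -> 2 <= maxn m n -> 2 * (m * n) <= (m + n).-1 ^ 2.
Proof. by move=> *; rewrite expnS expn1; nia. Qed.

Section BinaryTrees.
Variable L : eqType.

Fixpoint bsize (b : btree L) : nat :=
  if b is BNode _ l r then (bsize l + bsize r).+1 else 0.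

Definition blabel (b : btree L) : option L :=
  if b is BNode x _ _ then Some x else None.

Lemma bsize_bsubtrees b c : c \in bsubtrees b -> bsize c <= bsize b.
Proof.
elim: b => [|x l IHl r IHr] //=; rewrite inE mem_cat.
by case/orP => [/eqP-> // | /orP[/IHl | /IHr]] /=; lia.
Qed.

Definition chain (xs : seq L) : btree L :=
  foldr (fun x b => BNode x BEmpty b) BEmpty xs.

Lemma fcns_leaves (xs : seq L) : fcns [seq Node x [::] | x <- xs] = chain xs.
Proof. by elim: xs => //= x xs ->. Qed.

Lemma uniq_bsubtrees_chain xs : uniq (bsubtrees (chain xs)).
Proof.
elim: xs => //= x xs ->; rewrite andbT.
by apply/negP => /bsize_bsubtrees /=; lia.
Qed.

Lemma blabel_bsubtrees_chain xs :
  map blabel (bsubtrees (chain xs)) = map Some xs.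
Proof. by elim: xs => //= x xs ->. Qed.

Lemma bout_bsubtrees_chain xs :
  sumn (map (@bout L) (bsubtrees (chain xs))) = (size xs).-1.
Proof. by elim: xs => [|x xs /= ->] //; case: xs. Qed.

End BinaryTrees.

Lemma mem_subtrees_self (A : eqType) (t : tree A) : t \in subtrees t.
Proof. by case: t => a ts; exact: mem_head. Qed.

Section HybridDag.
Variable A : eqType.
Implicit Types s t : tree A.

Definition internal_subtrees t : seq (tree A) :=
  [seq s <- undup (subtrees t) | 0 < size (children s)].

Definition leaf_labels s : seq (hlabel A) :=
  [seq (alpha u, None) | u <- children s].

Lemma dag_size_internal t :
  dag_size t = sumn [seq size (children s) | s <- internal_subtrees t].
Proof. exact: sumn_map_pos. Qed.

Lemma fcns_rho' s :
  fcns [:: rho' s] = BNode (inl (label s), Some s) (chain (leaf_labels s)) BEmpty.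
Proof. by rewrite /= -fcns_leaves -map_comp. Qed.

Lemma sumn_bout_hdag_forest t :
  sumn (map (@bout _) (hdag_forest t)) = size (internal_subtrees t).
Proof.
have : all (fun s => 0 < size (children s)) (internal_subtrees t) by exact: filter_all.
rewrite /hdag_forest -/(internal_subtrees t) -map_comp.
elim: (internal_subtrees t) => //= s ss IH /andP[s_int /IH ->].
by case: s s_int => a [|u us].
Qed.

Lemma hdag_size_ge t s : s \in internal_subtrees t ->
  size (internal_subtrees t) + (size (children s)).-1 <= hdag_size t.
Proof.
move=> s_int; set C := bsubtrees (chain (leaf_labels s)).
have -> : (size (children s)).-1 = sumn (map (@bout _) C).
  by rewrite bout_bsubtrees_chain size_map.
rewrite -sumn_bout_hdag_forest -sumn_cat -map_cat; apply: sumn_map_le_undup.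
  (* Roots are marked by their subtree, spine nodes are unmarked. *)
  rewrite cat_uniq uniq_bsubtrees_chain andbT; apply/andP; split.
    rewrite map_inj_in_uniq ?filter_uniq ?undup_uniq // => x y _ _.
    by rewrite !fcns_rho' => -[].
  apply/hasP => -[b /(map_f (@blabel _)) + /mapP[x _ b_eq]].
  by rewrite blabel_bsubtrees_chain b_eq fcns_rho' -map_comp => /mapP[].
move=> b; rewrite mem_cat => /orP[b_roots | bC]; apply/flatten_mapP.
  by exists b => //; case/mapP: b_roots => x _ ->; rewrite fcns_rho' mem_head.
exists (fcns [:: rho' s]); first exact: (map_f (fun s => fcns [:: rho' s])).
by rewrite fcns_rho' /= inE cats0 bC orbT.
Qed.

Lemma mem_internal_subtrees_self t :
  0 < size (children t) -> t \in internal_subtrees t.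
Proof. by move=> t_ch; rewrite mem_filter mem_undup t_ch mem_subtrees_self. Qed.

Lemma two_le_internal_subtrees_or_children t : 2 <= edges t ->
  (2 <= size (internal_subtrees t)) || (2 <= size (children t)).
Proof.
case: t => a [|c [|c' cs]] //=; last by rewrite orbT.
rewrite addn0 => edges_c; set t := Node a [:: c].
have c_int : c \in internal_subtrees t.
  rewrite mem_filter mem_undup /= cats0 inE mem_subtrees_self orbT andbT.
  by case: c edges_c {t} => b [].
have t_int : t \in internal_subtrees t by exact: mem_internal_subtrees_self.
have c_neq_t : c != t by apply/eqP => /(congr1 (@edges A)) /=; lia.
apply/orP; left; rewrite -[2]/(size [:: c; t]).
apply: uniq_leq_size; first by rewrite /= inE c_neq_t.
by move=> x; rewrite !inE => /orP[] /eqP->.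
Qed.

End HybridDag.

Theorem theorem2 (Sigma : finType) (t : tree Sigma) :
  2 <= edges t -> 2 * dag_size t <= hdag_size t ^ 2.
Proof.
move=> t_edges; have t_ch : 0 < size (children t) by case: t t_edges => a [].
set n := size (internal_subtrees t); set h := hdag_size t.
have t_int := mem_internal_subtrees_self t_ch.
have n_pos : 0 < n by rewrite /n -has_predT; apply/hasP; exists t.
have children_le : {in internal_subtrees t, forall s, size (children s) <= h.+1 - n}.
  by move=> s /hdag_size_ge; lia.
pose X := h.+1 - n.
have dag_le : dag_size t <= n * X.
  by rewrite dag_size_internal; exact: sumn_map_le_const.
have children_t_le := children_le t t_int.
have hE : h = (n + X).-1 by have := hdag_size_ge t_int; rewrite /X; lia.
rewrite hE; apply: leq_trans (leq_mul (leqnn 2) dag_le) (leq_double_mul_sqr _ _ _) => //.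
  exact: leq_trans children_t_le.
by case/orP: (two_le_internal_subtrees_or_children t_edges) => two_le; lia.
Qed.
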